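(* Let $(A,B)$ be controllable, $Q,R$ positive definite, $\theta\in\mathbb R^n$, and let $P^e$ be the unique positive definite solution of the DARE $P^e=Q+A^\top(P^e-P^eB(B^\top P^eB+R)^{-1}B^\top P^e)A$. Set $M^e=P^e-P^eB(R+B^\top P^eB)^{-1}B^\top P^e$, $H^e=M^e-M^eA(Q+A^\top M^eA)^{-1}A^\top M^e$, $K^e=(R+B^\top P^eB)^{-1}B^\top P^eA$, $K'=(R+B^\top P^eB)^{-1}B^\top P^e$, $\alpha^e=(I-(A-BK^e)^\top)^{-1}Q\theta$ (so $\alpha^e=Q\theta+(A-BK^e)^\top\alpha^e$), and $\beta^e=(P^e)^{-1}\alpha^e=F\theta$ with $F=(P^e)^{-1}(I-(A-BK^e)^\top)^{-1}Q$. Then: (i) for every initial state $x_0$, the optimal average cost $\lambda^e=\lim_{N\to\infty}\frac1N\min\sum_{t=0}^{N-1}\big[\frac12(x_t-\theta)^\top Q(x_t-\theta)+\frac12u_t^\top Ru_t\big]$ (minimum over $x_{t+1}=Ax_t+Bu_t$) exists, does not depend on $x_0$, and equals $\frac12(A\theta-\beta^e)^\top H^e(A\theta-\beta^e)$; (ii) $h^e(x)=\frac12(x-\beta^e)^\top P^e(x-\beta^e)$ satisfies the Bellman equation $h^e(x)+\lambda^e=\min_u\big(\frac12(x-\theta)^\top Q(x-\theta)+\frac12u^\top Ru+h^e(Ax+Bu)\big)$ for all $x$; (iii) the stationary controller $u=-K^ex+K'\beta^e$ attains long-run average cost at most $\lambda^e$, hence is optimal.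
   Context: Here $I-(A-BK^e)^\top$ is invertible since $A-BK^e$ is Schur stable (all eigenvalues in the open unit disk). Matrix inequalities/positive definiteness are in the Loewner sense. *)

From HB Require Import structures.
From mathcomp Require Import all_boot all_order all_algebra.
Set Implicit Arguments. Unset Strict Implicit. Unset Printing Implicit Defensive.
Import Order.TTheory GRing.Theory Num.Theory.
Local Open Scope ring_scope.

Section LQT.
Variable R : archiRcfType.

Definition qf (n : nat) (M : 'M[R]_n) (x : 'cV[R]_n) : R := (x^T *m M *m x) 0 0.

Definition posdef (n : nat) (M : 'M[R]_n) : Prop :=
  M^T = M /\ forall x : 'cV[R]_n, x != 0 -> 0 < qf M x.

Definition controllable (n m : nat) (A : 'M[R]_n) (B : 'M[R]_(n, m)) : Prop :=
  \rank (\mxrow_(k < n) (A ^+ k *m B)) = n.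

Fixpoint traj (n m : nat) (A : 'M[R]_n) (B : 'M[R]_(n, m)) (x0 : 'cV[R]_n)
    (u : nat -> 'cV[R]_m) (t : nat) : 'cV[R]_n :=
  match t with
  | 0 => x0
  | t'.+1 => A *m traj A B x0 u t' + B *m u t'
  end.

Fixpoint fb_traj (n m : nat) (A : 'M[R]_n) (B : 'M[R]_(n, m)) (K : 'M[R]_(m, n))
    (c : 'cV[R]_m) (x0 : 'cV[R]_n) (t : nat) : 'cV[R]_n :=
  match t with
  | 0 => x0
  | t'.+1 => A *m fb_traj A B K c x0 t' + B *m (- K *m fb_traj A B K c x0 t' + c)
  end.

Definition stage (n m : nat) (Q : 'M[R]_n) (Rw : 'M[R]_m) (theta : 'cV[R]_n)
    (x : 'cV[R]_n) (u : 'cV[R]_m) : R :=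
  2^-1 * qf Q (x - theta) + 2^-1 * qf Rw u.

Definition cost (n m : nat) (A : 'M[R]_n) (B : 'M[R]_(n, m)) (Q : 'M[R]_n)
    (Rw : 'M[R]_m) (theta : 'cV[R]_n) (x0 : 'cV[R]_n) (u : nat -> 'cV[R]_m)
    (N : nat) : R :=
  \sum_(t < N) stage Q Rw theta (traj A B x0 u t) (u t).

Definition is_min_cost (n m : nat) (A : 'M[R]_n) (B : 'M[R]_(n, m)) (Q : 'M[R]_n)
    (Rw : 'M[R]_m) (theta : 'cV[R]_n) (x0 : 'cV[R]_n) (N : nat) (v : R) : Prop :=
  (exists u, cost A B Q Rw theta x0 u N = v) /\
  (forall u, v <= cost A B Q Rw theta x0 u N).

Definition cvg_to (s : nat -> R) (l : R) : Prop :=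
  forall eps : R, 0 < eps -> exists N0 : nat, forall N, (N0 <= N)%N -> `|s N - l| < eps.

Definition limsup_le (s : nat -> R) (l : R) : Prop :=
  forall eps : R, 0 < eps -> exists N0 : nat, forall N, (N0 <= N)%N -> s N <= l + eps.

Definition liminf_ge (s : nat -> R) (l : R) : Prop :=
  forall eps : R, 0 < eps -> exists N0 : nat, forall N, (N0 <= N)%N -> l - eps <= s N.

End LQT.

From HB Require Import structures.
From mathcomp Require Import all_boot all_order all_algebra.
From mathcomp Require Import ring lra.
From Stdlib Require Import ClassicalEpsilon.
Set Implicit Arguments. Unset Strict Implicit. Unset Printing Implicit Defensive.
Import Order.TTheory GRing.Theory Num.Theory.
Local Open Scope ring_scope.

(* Write S = R + B^T P B, K' = S^-1 B^T P, Ke = K' A, L = A - B Ke and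
   h x = 1/2 (x - beta)^T P (x - beta).  The proof is algebraic at its core:
   - completing the square in u, u^T R u + |z + B u|_P^2 = |z|_Me^2 + |u + K' z|_S^2,
     together with the DARE in the form P = Q + A^T Me A, yields the Lyapunov
     identity P = Q + Ke^T R Ke + L^T P L (so I - L^T is invertible as Q > 0) and,
     through the fixed point alpha = Q theta + L^T alpha, the tracking identity
     |x - theta|_Q^2 + |A x - beta|_Me^2 = |x - beta|_P^2 + |A theta - beta|_He^2;
   - adding both gives the Bellman identity
     stage x u + h (A x + B u) = h x + lambda + 1/2 |u - (-Ke x + K' beta)|_S^2,
     which is part (ii);
   - along the closed loop the Bellman identity telescopes to cost <= N lambda + h x0;
     for an arbitrary control the Bellman inequality, telescoped with weights
     (1 - eps)^t where the stage cost dominates eps h - c, gives cost >= N lambda - K;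
   - finite-horizon minima exist by dynamic programming on convex quadratic value
     functions; dividing both bounds by N gives parts (i) and (iii). *)

Section QuadraticForms.
Variable R : archiRcfType.

Definition bf (p q : nat) (M : 'M[R]_(p, q)) (x : 'cV[R]_p) (y : 'cV[R]_q) : R :=
  (x^T *m M *m y) 0 0.

Lemma qfE n (M : 'M[R]_n) x : qf M x = bf M x x. Proof. by []. Qed.

Lemma bfDl p q (M : 'M[R]_(p, q)) x1 x2 y : bf M (x1 + x2) y = bf M x1 y + bf M x2 y.
Proof. by rewrite /bf linearD /= !mulmxDl mxE. Qed.

Lemma bfDr p q (M : 'M[R]_(p, q)) x y1 y2 : bf M x (y1 + y2) = bf M x y1 + bf M x y2.
Proof. by rewrite /bf mulmxDr mxE. Qed.

Lemma bfNl p q (M : 'M[R]_(p, q)) x y : bf M (- x) y = - bf M x y.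
Proof. by rewrite /bf linearN /= !mulNmx mxE. Qed.

Lemma bfNr p q (M : 'M[R]_(p, q)) x y : bf M x (- y) = - bf M x y.
Proof. by rewrite /bf mulmxN mxE. Qed.

Lemma bfZl p q (M : 'M[R]_(p, q)) a x y : bf M (a *: x) y = a * bf M x y.
Proof. by rewrite /bf linearZ /= -!scalemxAl mxE. Qed.

Lemma bfZr p q (M : 'M[R]_(p, q)) a x y : bf M x (a *: y) = a * bf M x y.
Proof. by rewrite /bf -scalemxAr mxE. Qed.

Lemma bf0l p q (M : 'M[R]_(p, q)) y : bf M 0 y = 0.
Proof. by rewrite /bf trmx0 !mul0mx mxE. Qed.

Lemma bf0m p q (x : 'cV[R]_p) (y : 'cV[R]_q) : bf (0 : 'M_(p, q)) x y = 0.
Proof. by rewrite /bf mulmx0 mul0mx mxE. Qed.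

Lemma bfDm p q (M N : 'M[R]_(p, q)) x y : bf (M + N) x y = bf M x y + bf N x y.
Proof. by rewrite /bf mulmxDr mulmxDl mxE. Qed.

Lemma bfBm p q (M N : 'M[R]_(p, q)) x y : bf (M - N) x y = bf M x y - bf N x y.
Proof. by rewrite /bf mulmxBr mulmxBl !mxE. Qed.

Lemma bfMr p q k (M : 'M[R]_(p, q)) (C : 'M[R]_(q, k)) x (y : 'cV[R]_k) :
  bf M x (C *m y) = bf (M *m C) x y.
Proof. by rewrite /bf !mulmxA. Qed.

Lemma bfMl p q k (M : 'M[R]_(p, q)) (C : 'M[R]_(p, k)) (x : 'cV[R]_k) y :
  bf M (C *m x) y = bf (C^T *m M) x y.
Proof. by rewrite /bf trmx_mul !mulmxA. Qed.

Lemma bf_tr p q (M : 'M[R]_(p, q)) x y : bf M x y = bf M^T y x.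
Proof.
rewrite /bf; transitivity ((x^T *m M *m y)^T 0 0); first by rewrite [RHS]mxE.
by rewrite !trmx_mul trmxK mulmxA.
Qed.

Lemma bf_dot p q (M : 'M[R]_(p, q)) x y : bf M x y = bf 1%:M x (M *m y).
Proof. by rewrite bfMr mul1mx. Qed.

Lemma bf_dotC p (a b : 'cV[R]_p) : bf 1%:M a b = bf 1%:M b a.
Proof. by rewrite bf_tr trmx1. Qed.

Lemma bf_sym n (M : 'M[R]_n) x y : M^T = M -> bf M x y = bf M y x.
Proof. by move=> sM; rewrite bf_tr sM. Qed.

Lemma qfD n (M : 'M[R]_n) x y : M^T = M ->
  qf M (x + y) = qf M x + 2 * bf M x y + qf M y.
Proof. by move=> sM; rewrite !qfE bfDl !bfDr (bf_sym y x sM); ring. Qed.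

Lemma qfN n (M : 'M[R]_n) x : qf M (- x) = qf M x.
Proof. by rewrite !qfE bfNl bfNr opprK. Qed.

Lemma qfZ n (M : 'M[R]_n) a x : qf M (a *: x) = a ^+ 2 * qf M x.
Proof. by rewrite !qfE bfZl bfZr; ring. Qed.

Lemma qfM n k (M : 'M[R]_n) (C : 'M[R]_(n, k)) x : qf M (C *m x) = qf (C^T *m M *m C) x.
Proof. by rewrite !qfE bfMl bfMr. Qed.

Lemma qf0 n (M : 'M[R]_n) : qf M 0 = 0.
Proof. by rewrite qfE bf0l. Qed.

Definition psd n (M : 'M[R]_n) : Prop := forall x, 0 <= qf M x.

Lemma posdef_psd n (M : 'M[R]_n) : posdef M -> psd M.
Proof.
move=> [_ pM] x; have [->|nx] := eqVneq x 0; last exact/ltW/pM.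
by rewrite qf0.
Qed.

Lemma qf_add_le n (M : 'M[R]_n) x y : M^T = M -> psd M ->
  qf M (x + y) <= 2 * qf M x + 2 * qf M y.
Proof.
move=> sM pM; have := qfD x y sM; have := qfD x (- y) sM.
by rewrite bfNr qfN; have := pM (x - y); lra.
Qed.

Lemma psd_comp p q (M : 'M[R]_p) (F : 'M[R]_(p, q)) : psd M -> psd (F^T *m M *m F).
Proof. by move=> pM x; rewrite -qfM. Qed.

Lemma psd_add p (M1 M2 : 'M[R]_p) : psd M1 -> psd M2 -> psd (M1 + M2).
Proof. by move=> h1 h2 x; rewrite qfE bfDm -!qfE; apply: addr_ge0. Qed.

Lemma sym_comp p q (M : 'M[R]_p) (F : 'M[R]_(p, q)) :
  M^T = M -> (F^T *m M *m F)^T = F^T *m M *m F.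
Proof. by move=> sM; rewrite !trmx_mul trmxK sM mulmxA. Qed.

Lemma unitmx_of_ker0 k (X : 'M[R]_k) :
  (forall v : 'rV[R]_k, v *m X = 0 -> v = 0) -> X \in unitmx.
Proof.
move=> hX; rewrite -row_free_unit -kermx_eq0; apply/negP => /negP /rowV0Pn [v hv nv].
move/submxP: hv => [D hD].
have : v *m X = 0 by rewrite hD -mulmxA mulmx_ker mulmx0.
by move/hX => v0; move: nv; rewrite v0 eqxx.
Qed.

Lemma trmx_neq0 k (v : 'rV[R]_k) : v != 0 -> v^T != 0.
Proof. by apply: contra => /eqP e; rewrite -(trmxK v) e trmx0. Qed.

Lemma posdef_unit n (M : 'M[R]_n) : posdef M -> M \in unitmx.
Proof.
move=> [_ pM]; apply: unitmx_of_ker0 => v hv.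
have [//|/trmx_neq0/pM] := eqVneq v 0.
by rewrite /qf trmxK hv mul0mx mxE ltxx.
Qed.

Lemma cauchy_schwarz n (M : 'M[R]_n) y z : posdef M -> bf M y z ^+ 2 <= qf M y * qf M z.
Proof.
move=> hM; have [sM pM] := hM.
have [->|ny] := eqVneq y 0; first by rewrite bf0l qf0; lra.
have ha := pM _ ny; set a := qf M y in ha *; set b := bf M y z.
have := posdef_psd hM (z - (b / a) *: y).
rewrite qfD // qfN qfZ bfNr bfZr -/a (bf_sym _ _ sM) -/b.
set t := b / a; have -> : b = t * a by rewrite /t divfK // gt_eqF.
move=> h; have : 0 <= a * (qf M z - t ^+ 2 * a) by apply: mulr_ge0; lra.
nra.
Qed.

Lemma coord_bound n (Q : 'M[R]_n) (w : 'cV[R]_n) i : posdef Q ->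
  w i 0 ^+ 2 <= qf Q (invmx Q *m ('e_i)^T) * qf Q w.
Proof.
move=> hQ; have [sQ _] := hQ.
suff -> : w i 0 = bf Q (invmx Q *m ('e_i)^T) w by exact: cauchy_schwarz.
rewrite bfMl trmx_inv sQ mulVmx ?posdef_unit // /bf trmxK mulmx1.
by rewrite -(rowE i w) mxE.
Qed.

Lemma qf_dominated n (Q N : 'M[R]_n) : posdef Q ->
  exists C, 0 <= C /\ forall w, qf N w <= C * qf Q w.
Proof.
move=> hQ.
pose d i := qf Q (invmx Q *m ('e_i)^T); pose D := \sum_i d i.
have D0 : 0 <= D by apply: sumr_ge0 => i _; exact: posdef_psd.
have dD i : d i <= D.
  by rewrite /D (bigD1 i) //= lerDl; apply: sumr_ge0 => j _; exact: posdef_psd.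
exists (\sum_j \sum_i `|N i j| * D); split.
  by apply: sumr_ge0 => j _; apply: sumr_ge0 => i _; apply: mulr_ge0.
move=> w; have q0 := posdef_psd hQ w.
have wb i : w i 0 ^+ 2 <= D * qf Q w.
  by apply: le_trans (coord_bound w i hQ) _; apply: ler_wpM2r => //; apply: dD.
rewrite /qf mxE mulr_suml; apply: ler_sum => j _.
rewrite mxE mulr_suml mulr_suml; apply: ler_sum => i _; rewrite mxE.
have AMGM : w i 0 * N i j * w j 0 <= `|N i j| * ((w i 0 ^+ 2 + w j 0 ^+ 2) / 2).
  have [hN|hN] := leP 0 (N i j).
    by rewrite ger0_norm //; have := mulr_ge0 hN (sqr_ge0 (w i 0 - w j 0)); nra.
  rewrite ltr0_norm //; have hN' : 0 <= - N i j by lra.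
  by have := mulr_ge0 hN' (sqr_ge0 (w i 0 + w j 0)); nra.
apply: le_trans AMGM _; rewrite -mulrA; apply: ler_wpM2l => //.
by have := wb i; have := wb j; rewrite /qf; lra.
Qed.

End QuadraticForms.

Section QuadraticFunctions.
Variable R : archiRcfType.

Definition quadf p (M : 'M[R]_p) (g : 'cV[R]_p) (c : R) (x : 'cV[R]_p) : R :=
  2^-1 * qf M x + bf 1%:M g x + c.

Definition convex_quadratic p (W : 'cV[R]_p -> R) : Prop :=
  exists M g c, M^T = M /\ psd M /\ forall x, W x = quadf M g c x.

Lemma quadf_add p (M1 M2 : 'M[R]_p) g1 g2 c1 c2 x :
  quadf M1 g1 c1 x + quadf M2 g2 c2 x = quadf (M1 + M2) (g1 + g2) (c1 + c2) x.
Proof. by rewrite /quadf !qfE bfDm bfDl; ring. Qed.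

Lemma quadf_affine p q (M : 'M[R]_p) g c (F : 'M[R]_(p, q)) d x : M^T = M ->
  quadf M g c (F *m x + d) =
  quadf (F^T *m M *m F) (F^T *m (M *m d + g)) (c + 2^-1 * qf M d + bf 1%:M g d) x.
Proof.
move=> sM; rewrite /quadf qfD // qfM bfDr mulmxDr bfDl.
have -> : bf M (F *m x) d = bf 1%:M (F^T *m (M *m d)) x.
  by rewrite [RHS]bf_dotC !bfMr bfMl mul1mx.
have -> : bf 1%:M g (F *m x) = bf 1%:M (F^T *m g) x.
  by rewrite bfMr mul1mx [RHS]bfMl trmxK mulmx1.
lra.
Qed.

Lemma convex_quadratic_affine p q (M : 'M[R]_p) g c (F : 'M[R]_(p, q)) d :
  M^T = M -> psd M -> convex_quadratic (fun x => quadf M g c (F *m x + d)).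
Proof.
move=> sM pM; exists (F^T *m M *m F), (F^T *m (M *m d + g)),
  (c + 2^-1 * qf M d + bf 1%:M g d).
by split; [exact: sym_comp | split; [exact: psd_comp | move=> x; exact: quadf_affine]].
Qed.

Lemma convex_quadratic_eq p (W1 W2 : 'cV[R]_p -> R) :
  (forall x, W1 x = W2 x) -> convex_quadratic W1 -> convex_quadratic W2.
Proof. by move=> e [M [g [c [sM [pM hW]]]]]; exists M, g, c; do 2 split => //; move=> x; rewrite -e. Qed.

Lemma convex_quadratic_add p (W1 W2 : 'cV[R]_p -> R) :
  convex_quadratic W1 -> convex_quadratic W2 -> convex_quadratic (fun x => W1 x + W2 x).
Proof.
move=> [M1 [g1 [c1 [s1 [p1 h1]]]]] [M2 [g2 [c2 [s2 [p2 h2]]]]].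
exists (M1 + M2), (g1 + g2), (c1 + c2); split; first by rewrite linearD /= s1 s2.
by split; [exact: psd_add | move=> x; rewrite h1 h2 quadf_add].
Qed.

End QuadraticFunctions.

Section Trajectories.
Variable R : archiRcfType.
Variables (n m : nat) (A : 'M[R]_n) (B : 'M[R]_(n, m)) (Q : 'M[R]_n) (Rw : 'M[R]_m)
  (theta : 'cV[R]_n).

Lemma traj_shift x v t :
  traj A B x v t.+1 = traj A B (A *m x + B *m v 0%N) (fun t => v t.+1) t.
Proof. by elim: t => [//|t IH] /=; rewrite -IH. Qed.

Lemma cost_shift x v N : cost A B Q Rw theta x v N.+1 =
  stage Q Rw theta x (v 0%N) + cost A B Q Rw theta (A *m x + B *m v 0%N) (fun t => v t.+1) N.
Proof.
rewrite /cost big_ord_recl; congr (_ + _).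
by apply: eq_bigr => i _; rewrite lift0 traj_shift.
Qed.

End Trajectories.

Section ControlWeight.
Variable R : archiRcfType.
Variables (n m : nat) (B : 'M[R]_(n, m)) (Rw : 'M[R]_m) (P : 'M[R]_n).

Lemma qf_weight u : qf (Rw + B^T *m P *m B) u = qf Rw u + qf P (B *m u).
Proof. by rewrite !qfE bfDm -bfMr -bfMl. Qed.

Lemma weight_posdef : posdef Rw -> P^T = P -> psd P -> posdef (Rw + B^T *m P *m B).
Proof.
move=> [sR pR] sP pP; split; first by rewrite linearD /= sR sym_comp.
by move=> u nu; rewrite qf_weight; have := pR u nu; have := pP (B *m u); lra.
Qed.

End ControlWeight.

(* Finite-horizon dynamic programming: the minimum of the N-step cost exists
   because Bellman's recursion maps convex quadratic value functions to
   convex quadratic value functions, with an affine minimizer. *)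
Section FiniteHorizon.
Variable R : archiRcfType.
Variables (n m : nat) (A : 'M[R]_n) (B : 'M[R]_(n, m)) (Q : 'M[R]_n) (Rw : 'M[R]_m)
  (theta : 'cV[R]_n).
Hypothesis hQ : posdef Q.
Hypothesis hR : posdef Rw.

Lemma stage_affine_quadratic (F : 'M[R]_(m, n)) f :
  convex_quadratic (fun x => stage Q Rw theta x (F *m x + f)).
Proof.
have [sQ _] := hQ; have [sR _] := hR.
have eq_stage x : stage Q Rw theta x (F *m x + f) =
    quadf Q 0 0 (1%:M *m x + - theta) + quadf Rw 0 0 (F *m x + f).
  by rewrite /stage /quadf mul1mx !bf0l !addr0.
have := convex_quadratic_add (convex_quadratic_affine 0 0 1%:M (- theta) sQ (posdef_psd hQ))
  (convex_quadratic_affine 0 0 F f sR (posdef_psd hR)).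
by move=> [M [g [c [sM [pM hW]]]]]; exists M, g, c; do 2 split => //; move=> x; rewrite eq_stage.
Qed.

Section OneStep.
Variables (P0 : 'M[R]_n) (g : 'cV[R]_n) (c : R).
Hypothesis sP0 : P0^T = P0.
Hypothesis pP0 : psd P0.

Let W := quadf P0 g c.
Let S0 := Rw + B^T *m P0 *m B.
(* The minimizing control of u |-> stage x u + W (A x + B u), affine in x. *)
Let F := - (invmx S0 *m B^T *m P0 *m A).
Let f := - (invmx S0 *m B^T *m g).
Let pi x := F *m x + f.

Lemma S0_unit : S0 \in unitmx.
Proof. exact: posdef_unit (weight_posdef B hR sP0 pP0). Qed.

Lemma first_order x : Rw *m pi x + B^T *m (P0 *m (A *m x + B *m pi x) + g) = 0.
Proof.
have S0pi : S0 *m pi x = - (B^T *m (P0 *m (A *m x) + g)).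
  have -> : pi x = - (invmx S0 *m (B^T *m (P0 *m (A *m x) + g))).
    by rewrite /pi /F /f mulNmx -opprD !mulmxDr !mulmxA.
  by rewrite mulmxN mulKVmx // S0_unit.
have -> : Rw *m pi x + B^T *m (P0 *m (A *m x + B *m pi x) + g) =
    S0 *m pi x + B^T *m (P0 *m (A *m x) + g).
  move: (pi x) => v; rewrite /S0 mulmxDl !mulmxDr !mulmxA.
  by rewrite [B^T *m P0 *m A *m x + _]addrC !addrA.
by rewrite S0pi addNr.
Qed.

Lemma one_step_square x u :
  stage Q Rw theta x u + W (A *m x + B *m u) =
  stage Q Rw theta x (pi x) + W (A *m x + B *m pi x) + 2^-1 * qf S0 (u - pi x).
Proof.
have [sR _] := hR.
set w := u - pi x; set y0 := A *m x + B *m pi x.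
have -> : u = pi x + w by rewrite /w addrC subrK.
have -> : A *m x + B *m (pi x + w) = y0 + B *m w by rewrite mulmxDr addrA.
have cross : bf Rw (pi x) w + bf P0 y0 (B *m w) + bf 1%:M g (B *m w) = 0.
  have := congr1 (fun v => bf 1%:M v w) (first_order x).
  rewrite /= bf0l -/y0 (mulmxDr B^T (P0 *m y0) g) (bfDl _ (Rw *m pi x)) bfDl.
  by rewrite !bfMl !trmxK mulmx1 sR sP0 -!bfMr mulmx1 mul1mx (bf_dot B) addrA.
rewrite qf_weight /stage /W /quadf (qfD (pi x) w sR) (qfD y0 (B *m w) sP0) (bfDr 1%:M g y0).
lra.
Qed.

Lemma one_step : exists (W' : 'cV[R]_n -> R) (pi : 'cV[R]_n -> 'cV[R]_m),
  convex_quadratic W' /\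
  (forall x, stage Q Rw theta x (pi x) + W (A *m x + B *m pi x) = W' x) /\
  (forall x u, W' x <= stage Q Rw theta x u + W (A *m x + B *m u)).
Proof.
exists (fun x => stage Q Rw theta x (pi x) + W (A *m x + B *m pi x)), pi.
split; last split => // x u.
  apply: convex_quadratic_eq (convex_quadratic_add (stage_affine_quadratic F f)
    (convex_quadratic_affine g c (A + B *m F) (B *m f) sP0 pP0)) => x.
  by rewrite mulmxDl -mulmxA -[A *m x + _ + _]addrA -mulmxDr.
rewrite [X in _ <= X]one_step_square lerDl; apply: mulr_ge0; first by rewrite invr_ge0 ler0n.
exact: (posdef_psd (weight_posdef B hR sP0 pP0) _).
Qed.

End OneStep.

Lemma dp_step (W : 'cV[R]_n -> R) : convex_quadratic W ->
  exists (W' : 'cV[R]_n -> R) (pi : 'cV[R]_n -> 'cV[R]_m), convex_quadratic W' /\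
  (forall x, stage Q Rw theta x (pi x) + W (A *m x + B *m pi x) = W' x) /\
  (forall x u, W' x <= stage Q Rw theta x u + W (A *m x + B *m u)).
Proof.
move=> [P0 [g [c [sP0 [pP0 hW]]]]].
have [W' [pi [qW' [eq_pi le_pi]]]] := one_step g c sP0 pP0.
by exists W', pi; split=> //; split=> [x|x u]; rewrite hW //; exact: le_pi.
Qed.

Lemma dp_exists N : exists W : 'cV[R]_n -> R, convex_quadratic W /\
  forall x0, is_min_cost A B Q Rw theta x0 N (W x0).
Proof.
elim: N => [|N [W [qW hW]]].
  exists (fun _ => 0); split.
    exists 0, 0, 0; split; first by rewrite trmx0.
    split=> x; first by rewrite qfE bf0m.
    by rewrite /quadf qfE bf0m bf0l; ring.
  move=> x0; split; first by exists (fun _ => 0); rewrite /cost big_ord0.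
  by move=> u; rewrite /cost big_ord0.
have [W' [pi [qW' [heq hle]]]] := dp_step qW.
exists W'; split => // x0; split.
  have [[u' hu'] _] := hW (A *m x0 + B *m pi x0).
  exists (fun t => if t is t'.+1 then u' t' else pi x0).
  by rewrite cost_shift /= hu' heq.
move=> u; rewrite cost_shift.
have [_ h2] := hW (A *m x0 + B *m u 0%N).
by have := h2 (fun t => u t.+1); have := hle x0 (u 0%N); lra.
Qed.

End FiniteHorizon.

Lemma choice_nat (T : Type) (P : nat -> T -> Prop) :
  (forall N, exists v, P N v) -> exists V : nat -> T, forall N, P N (V N).
Proof.
move=> hP; exists (fun N => proj1_sig (constructive_indefinite_description _ (hP N))).
by move=> N; case: constructive_indefinite_description.
Qed.

Section Averages.
Variable R : archiRcfType.

Lemma eventually_large (x : R) : exists N0 : nat, forall N, (N0 <= N)%N -> x < N%:R.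
Proof.
exists (Num.Def.archi_bound `|x|).+1 => N hN.
have bound := archi_boundP (normr_ge0 x).
have le_N : (((Num.Def.archi_bound `|x|).+1)%:R : R) <= N%:R by rewrite ler_nat.
by have := ler_norm x; rewrite -natr1 in le_N; lra.
Qed.

Lemma avg_limsup (s : nat -> R) l K : (forall N, s N <= N%:R * l + K) ->
  limsup_le (fun N => N%:R^-1 * s N) l.
Proof.
move=> hs eps e0; have [N0 hN0] := eventually_large (`|K| / eps).
exists N0 => N /hN0 hN; set t := N%:R in hN *.
have t0 : 0 < t by apply: le_lt_trans hN; rewrite divr_ge0 // ltW.
rewrite mulrC ler_pdivrMr // mulrDl.
have := hs N; have := ler_norm K; rewrite -/t ltr_pdivrMr // in hN; nra.
Qed.

Lemma avg_liminf (s : nat -> R) l K : (forall N, N%:R * l - K <= s N) ->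
  liminf_ge (fun N => N%:R^-1 * s N) l.
Proof.
move=> hs eps e0.
have hs' N : - s N <= N%:R * (- l) + K by have := hs N; lra.
have [N0 hN0] := avg_limsup hs' e0.
by exists N0 => N /hN0; rewrite mulrN; lra.
Qed.

Lemma avg_cvg (s : nat -> R) l K : (forall N, s N <= N%:R * l + K) ->
  (forall N, N%:R * l - K <= s N) -> cvg_to (fun N => N%:R^-1 * s N) l.
Proof.
move=> h1 h2 eps e0; have e2 : 0 < eps / 2 by lra.
have [N1 hN1] := avg_limsup h1 e2; have [N2 hN2] := avg_liminf h2 e2.
exists (maxn N1 N2) => N hN.
have := hN1 N (leq_trans (leq_maxl _ _) hN); have := hN2 N (leq_trans (leq_maxr _ _) hN).
by move=> a b; rewrite ltr_norml; apply/andP; split; lra.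
Qed.

End Averages.

Section Riccati.
Variable R : archiRcfType.
Variables (n m : nat) (A : 'M[R]_n) (B : 'M[R]_(n, m)) (Q : 'M[R]_n) (Rw : 'M[R]_m)
  (theta : 'cV[R]_n) (P : 'M[R]_n).
Hypothesis hQ : posdef Q.
Hypothesis hR : posdef Rw.
Hypothesis hP : posdef P.
Hypothesis dare :
  P = Q + A^T *m (P - P *m B *m invmx (B^T *m P *m B + Rw) *m B^T *m P) *m A.

Let S := Rw + B^T *m P *m B.
Let Me := P - P *m B *m invmx S *m B^T *m P.
Let K' := invmx S *m B^T *m P.
Let Ke := invmx S *m B^T *m P *m A.
Let L := A - B *m Ke.
Let alpha := invmx (1%:M - L^T) *m Q *m theta.
Let beta := invmx P *m alpha.
Let He := Me - Me *m A *m invmx (Q + A^T *m Me *m A) *m A^T *m Me.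
Let lambda := 2^-1 * qf He (A *m theta - beta).
Let h x := 2^-1 * qf P (x - beta).

Lemma P_sym : P^T = P. Proof. by case: hP. Qed.

Lemma S_posdef : posdef S.
Proof. exact: weight_posdef hR P_sym (posdef_psd hP). Qed.

Lemma S_unit : S \in unitmx. Proof. exact: posdef_unit S_posdef. Qed.

Lemma P_unit : P \in unitmx. Proof. exact: posdef_unit hP. Qed.

Lemma Me_sym : Me^T = Me.
Proof.
rewrite /Me linearB /= P_sym !trmx_mul !trmxK trmx_inv.
by have [-> _] := S_posdef; rewrite P_sym !mulmxA.
Qed.

Lemma dare_Me : P = Q + A^T *m Me *m A.
Proof. by rewrite {1}dare /Me /S (addrC (B^T *m P *m B) Rw). Qed.

Lemma qf_P_split x : qf P x = qf Q x + qf Me (A *m x).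
Proof. by rewrite {1}dare_Me !qfE bfDm -bfMr -bfMl. Qed.

Lemma complete_square z u : qf Rw u + qf P (z + B *m u) = qf Me z + qf S (u + K' *m z).
Proof.
have [sS _] := S_posdef.
set X := B^T *m P.
have SK' : S *m K' = X by rewrite /K' !mulmxA mulmxV ?S_unit // mul1mx.
have Me_qf : qf Me z = qf P z - qf (invmx S) (X *m z).
  have XT : X^T = P *m B by rewrite /X trmx_mul trmxK P_sym.
  have -> : Me = P - X^T *m invmx S *m X by rewrite XT /Me /X !mulmxA.
  by rewrite !qfE bfBm -bfMr -bfMl.
have K'_qf : qf S (K' *m z) = qf (invmx S) (X *m z).
  have -> : K' *m z = invmx S *m (X *m z) by rewrite /K' /X !mulmxA.
  by rewrite [LHS]qfM trmx_inv sS mulVmx ?S_unit // mul1mx.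
have cross_u : bf S u (K' *m z) = bf X u z by rewrite bfMr SK'.
have cross_z : bf P z (B *m u) = bf X u z by rewrite bfMr bf_tr trmx_mul P_sym.
rewrite Me_qf (qfD u (K' *m z) sS) cross_u K'_qf qf_weight (qfD z (B *m u) P_sym) cross_z.
ring.
Qed.

Lemma lyapunov x : qf P x = qf Q x + qf Rw (Ke *m x) + qf P (L *m x).
Proof.
have := complete_square (A *m x) (- (Ke *m x)).
have -> : - (Ke *m x) + K' *m (A *m x) = 0 by rewrite mulmxA addNr.
rewrite qf0 addr0 qfN => sq.
have -> : L *m x = A *m x + B *m - (Ke *m x) by rewrite /L mulmxBl mulmxN (mulmxA B Ke x).
by rewrite -addrA sq -qf_P_split.
Qed.

(* Since Q > 0, the closed loop has no eigenvalue 1, so I - L^T is invertible. *)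
Lemma I_minus_LT_unit : (1%:M - L^T) \in unitmx.
Proof.
apply: unitmx_of_ker0 => v hv.
have fixed : L *m v^T = v^T.
  apply/eqP; rewrite eq_sym -subr_eq0; apply/eqP.
  have := congr1 trmx hv; rewrite trmx_mul linearB /= trmxK trmx1 trmx0.
  by rewrite mulmxBl mul1mx.
have := lyapunov v^T; rewrite fixed; clear fixed hv => lyap.
have Rpos := posdef_psd hR (Ke *m v^T).
have [//|/trmx_neq0/(proj2 hQ) pos] := eqVneq v 0; exfalso; lra.
Qed.

Lemma alpha_fixed : alpha = Q *m theta + L^T *m alpha.
Proof.
have : (1%:M - L^T) *m alpha = Q *m theta.
  by rewrite /alpha -!mulmxA mulKVmx ?I_minus_LT_unit.
by rewrite mulmxBl mul1mx => <-; rewrite subrK.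
Qed.

Lemma LT_P : L^T *m P = A^T *m Me.
Proof.
rewrite /L /Me linearB /= !trmx_mul !trmxK P_sym trmx_inv.
by have [-> _] := S_posdef; rewrite mulmxBl mulmxBr !mulmxA.
Qed.

Lemma P_beta : P *m beta = Q *m theta + A^T *m Me *m beta.
Proof.
have Pb : P *m beta = alpha by rewrite /beta mulmxA mulmxV ?P_unit // mul1mx.
by rewrite Pb {1}alpha_fixed -Pb mulmxA LT_P.
Qed.

(* The tracking identity: the quadratic part of the Bellman equation splits off
   the constant 2 lambda. *)
Lemma tracking_identity x : qf Q (x - theta) + qf Me (A *m x - beta)
  = qf P (x - beta) + qf He (A *m theta - beta).
Proof.
set d := x - theta; set e := theta - beta; set v := A *m theta - beta.
have key : A^T *m Me *m v = P *m e.
  have AMA : A^T *m Me *m A = P - Q by rewrite {1}dare_Me addrC addKr.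
  have AMb : A^T *m Me *m beta = P *m beta - Q *m theta by rewrite P_beta addrC addKr.
  by rewrite /v mulmxBr mulmxA AMA AMb /e mulmxBl mulmxBr opprB addrA subrK.
have He_qf : qf He v = qf Me v - qf P e.
  rewrite /He -dare_Me !qfE bfBm.
  have -> : Me *m A *m invmx P *m A^T *m Me = (A^T *m Me)^T *m invmx P *m (A^T *m Me).
    by rewrite trmx_mul trmxK Me_sym !mulmxA.
  by rewrite -bfMr -bfMl key bfMl bfMr P_sym mulmxV ?P_unit // mul1mx.
have -> : x - beta = d + e by rewrite /d /e addrA subrK.
have -> : A *m x - beta = A *m d + v by rewrite /d /v mulmxBr addrA subrK.
rewrite He_qf (qfD (A *m d) v Me_sym) (qfD d e P_sym) qf_P_split.
have -> : bf Me (A *m d) v = bf P d e by rewrite bfMl bf_dot key -bf_dot.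
ring.
Qed.

Lemma bellman_identity x u : stage Q Rw theta x u + h (A *m x + B *m u)
  = h x + lambda + 2^-1 * qf S (u + K' *m (A *m x - beta)).
Proof.
rewrite /stage /h /lambda.
have -> : A *m x + B *m u - beta = (A *m x - beta) + B *m u by rewrite addrAC.
have sq := complete_square (A *m x - beta) u.
have tr := tracking_identity x.
lra.
Qed.

Let controller x := - Ke *m x + K' *m beta.

Lemma controller_residual x : controller x + K' *m (A *m x - beta) = 0.
Proof. by rewrite /controller mulNmx -mulmxA mulmxBr addrACA addNr subrr addr0. Qed.

Lemma bellman_eq x :
  stage Q Rw theta x (controller x) + h (A *m x + B *m controller x) = h x + lambda.
Proof. by rewrite bellman_identity controller_residual qf0 mulr0 addr0. Qed.

Lemma bellman_le x u : h x + lambda <= stage Q Rw theta x u + h (A *m x + B *m u).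
Proof.
rewrite bellman_identity lerDl; apply: mulr_ge0; first by rewrite invr_ge0 ler0n.
exact: (posdef_psd S_posdef _).
Qed.

Lemma h_ge0 x : 0 <= h x.
Proof. by apply: mulr_ge0; [rewrite invr_ge0 ler0n | exact: posdef_psd]. Qed.

Lemma stage_dominates_h : exists eps c, 0 < eps <= 1 /\
  forall x u, eps * h x - c <= stage Q Rw theta x u.
Proof.
have [C [C0 hC]] := qf_dominated P hQ.
pose eps := (2 * C + 2)^-1; pose c := qf P (theta - beta).
have e0 : 0 < eps by rewrite invr_gt0; lra.
have e1 : eps * (2 * C + 2) = 1 by rewrite mulVf // gt_eqF //; lra.
have c0 : 0 <= c by exact: posdef_psd.
exists eps, c; split; first by apply/andP; split => //; nra.
move=> x u; rewrite /stage /h.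
have := posdef_psd hR u; have := posdef_psd hQ (x - theta); have := hC (x - theta).
have := posdef_psd hP (x - theta).
have := qf_add_le (x - theta) (theta - beta) P_sym (posdef_psd hP).
rewrite addrA subrK -/c; nra.
Qed.

(* Telescoping the Bellman inequality with weights (1 - eps)^t: a lower bound
   for every control sequence that loses only a bounded amount against N lambda. *)
Lemma weighted_lower_bound eps c K : 0 < eps <= 1 ->
  (forall x u, eps * h x - c <= stage Q Rw theta x u) -> lambda + c <= eps * K ->
  forall N x v, N%:R * lambda + (1 - (1 - eps) ^+ N) * (h x - K) <= cost A B Q Rw theta x v N.
Proof.
move=> /andP [e0 e1] dom hK; elim => [|N IH] x v.
  by rewrite /cost big_ord0 expr0 subrr !mul0r addr0.
rewrite cost_shift; set x1 := A *m x + B *m v 0%N.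
have i1 := IH x1 (fun t => v t.+1).
have b1 := bellman_le x (v 0%N); have d1 := dom x (v 0%N).
set st := stage Q Rw theta x (v 0%N) in b1 d1 *.
set r := (1 - eps) ^+ N in i1 *.
have r0 : 0 <= r by apply: exprn_ge0; lra.
have r1 : r <= 1 by apply: exprn_ile1; lra.
have t1 : (1 - r) * (h x + lambda) <= (1 - r) * (st + h x1) by apply: ler_wpM2l; lra.
have t2 : r * (eps * h x - c) <= r * st by apply: ler_wpM2l.
have t3 : r * (lambda + c) <= r * (eps * K) by apply: ler_wpM2l.
rewrite exprS -/r -natr1; nra.
Qed.

Lemma cost_lower_bound : exists K, forall N x v,
  N%:R * lambda - K <= cost A B Q Rw theta x v N.
Proof.
have [eps [c [he dom]]] := stage_dominates_h; have /andP [e0 e1] := he.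
pose K := (`|lambda| + `|c|) / eps.
have K0 : 0 <= K by apply: divr_ge0; [apply: addr_ge0 | lra].
have hK : lambda + c <= eps * K.
  have -> : eps * K = `|lambda| + `|c| by rewrite /K; field; lra.
  by have := ler_norm lambda; have := ler_norm c; lra.
exists K => N x v; have := weighted_lower_bound he dom hK N x v.
have := h_ge0 x; have r0 : 0 <= (1 - eps) ^+ N by apply: exprn_ge0; lra.
have r1 : (1 - eps) ^+ N <= 1 by apply: exprn_ile1; lra.
move: ((1 - eps) ^+ N) r0 r1 => r r0 r1; nra.
Qed.

(* Along the closed loop the Bellman identity telescopes exactly. *)
Let ustar x0 t := controller (fb_traj A B Ke (K' *m beta) x0 t).

Lemma traj_closed_loop x0 t : traj A B x0 (ustar x0) t = fb_traj A B Ke (K' *m beta) x0 t.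
Proof. by elim: t => [//|t IH] /=; rewrite IH. Qed.

Lemma closed_loop_cost x0 N : cost A B Q Rw theta x0 (ustar x0) N
  = N%:R * lambda + h x0 - h (fb_traj A B Ke (K' *m beta) x0 N).
Proof.
elim: N => [|N IH]; first by rewrite /cost big_ord0 mul0r add0r subrr.
rewrite /cost big_ord_recr /= -/(cost _ _ _ _ _ _ _ _) IH traj_closed_loop.
by have := bellman_eq (fb_traj A B Ke (K' *m beta) x0 N); rewrite -natr1; lra.
Qed.

Lemma closed_loop_cost_le x0 N : cost A B Q Rw theta x0 (ustar x0) N <= N%:R * lambda + h x0.
Proof. by rewrite closed_loop_cost; have := h_ge0 (fb_traj A B Ke (K' *m beta) x0 N); lra. Qed.

Lemma optimal_average_cost x0 : exists V : nat -> R,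
  (forall N, is_min_cost A B Q Rw theta x0 N (V N)) /\
  cvg_to (fun N => N%:R^-1 * V N) lambda.
Proof.
have [V hV] : exists V : nat -> R, forall N, is_min_cost A B Q Rw theta x0 N (V N).
  apply: choice_nat => N; have [W [_ hW]] := dp_exists A B theta hQ hR N.
  by exists (W x0).
have [K hK] := cost_lower_bound.
exists V; split => //; apply: (avg_cvg (K := `|K| + h x0)) => N.
  have := (proj2 (hV N)) (ustar x0); have := closed_loop_cost_le x0 N.
  by have := normr_ge0 K; lra.
have [[u <-] _] := hV N; have := hK N x0 u; have := ler_norm K; have := h_ge0 x0; lra.
Qed.

Lemma bellman_equation x :
  (exists u, stage Q Rw theta x u + h (A *m x + B *m u) = h x + lambda) /\
  (forall u, h x + lambda <= stage Q Rw theta x u + h (A *m x + B *m u)).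
Proof. by split; [exists (controller x); exact: bellman_eq | exact: bellman_le]. Qed.

Lemma controller_optimal x0 :
  limsup_le (fun N => N%:R^-1 * cost A B Q Rw theta x0 (ustar x0) N) lambda /\
  (forall v, liminf_ge (fun N => N%:R^-1 * cost A B Q Rw theta x0 v N) lambda).
Proof.
have [K hK] := cost_lower_bound.
split; first exact: (avg_limsup (K := h x0)) (closed_loop_cost_le x0).
by move=> v; apply: (avg_liminf (K := K)) => N; exact: hK.
Qed.

End Riccati.

Unset Implicit Arguments.
Set Strict Implicit.

Theorem proposition1 (R : archiRcfType) (n m : nat)
  (A : 'M[R]_n) (B : 'M[R]_(n, m)) (Q : 'M[R]_n) (Rw : 'M[R]_m)
  (theta : 'cV[R]_n) (P : 'M[R]_n) :
  controllable A B -> posdef Q -> posdef Rw ->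
  posdef P ->
  P = Q + A^T *m (P - P *m B *m invmx (B^T *m P *m B + Rw) *m B^T *m P) *m A ->
  let Me := P - P *m B *m invmx (Rw + B^T *m P *m B) *m B^T *m P in
  let He := Me - Me *m A *m invmx (Q + A^T *m Me *m A) *m A^T *m Me in
  let Ke := invmx (Rw + B^T *m P *m B) *m B^T *m P *m A in
  let K' := invmx (Rw + B^T *m P *m B) *m B^T *m P in
  let alpha := invmx (1%:M - (A - B *m Ke)^T) *m Q *m theta in
  let beta := invmx P *m alpha in
  let lambda := 2^-1 * qf He (A *m theta - beta) in
  let h := fun x : 'cV[R]_n => 2^-1 * qf P (x - beta) in
  (* (i) optimal average cost exists, independent of x0, equals lambda *)
  (forall x0 : 'cV[R]_n, exists V : nat -> R,
      (forall N, is_min_cost A B Q Rw theta x0 N (V N)) /\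
      cvg_to (fun N => (N%:R)^-1 * V N) lambda) /\
  (* (ii) Bellman equation *)
  (forall x : 'cV[R]_n,
      (exists u : 'cV[R]_m,
          stage Q Rw theta x u + h (A *m x + B *m u) = h x + lambda) /\
      (forall u : 'cV[R]_m,
          h x + lambda <= stage Q Rw theta x u + h (A *m x + B *m u))) /\
  (* (iii) the stationary controller u = -Ke x + K' beta has long-run average cost
     at most lambda, hence is optimal (no control sequence does better) *)
  (forall x0 : 'cV[R]_n,
      let u := fun t => - Ke *m fb_traj A B Ke (K' *m beta) x0 t + K' *m beta in
      limsup_le (fun N => (N%:R)^-1 * cost A B Q Rw theta x0 u N) lambda /\
      (forall v : nat -> 'cV[R]_m,
         liminf_ge (fun N => (N%:R)^-1 * cost A B Q Rw theta x0 v N) lambda)).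
Proof.
move=> _ hQ hR hP dare /=.
split; first exact: optimal_average_cost.
split; first exact: bellman_equation.
exact: controller_optimal.
Qed.
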